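(* The group $N/g_SN$ is isomorphic to $\mathbb{Z}/g_S\mathbb{Z}$. Moreover, for every finite $1\leq k\leq\lvert S\rvert$, the group $N/g_kN$ is isomorphic to a subgroup of $\mathbb{Z}/g_k\mathbb{Z}$.
   Context: $S\subset\{2,3,\dots\}$ is a non-empty (possibly infinite) set of pairwise relatively prime integers, $N:=\mathbb{Z}[\{1/p:p\in S\}]\subset\mathbb{Q}$, $g_S:=\gcd(\{p-1:p\in S\})$, and for $1\leq k\leq\lvert S\rvert$, $g_k:=\gcd(p_1-1,\dots,p_k-1)$ where $p_1<\dots<p_k$ are the $k$ smallest elements of $S$. *)

From mathcomp Require Import all_boot all_order all_algebra.
Set Implicit Arguments. Unset Strict Implicit. Unset Printing Implicit Defensive.
Import Order.TTheory GRing.Theory Num.Theory.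
Local Open Scope ring_scope.

Definition admissible_set (S : nat -> Prop) : Prop :=
  [/\ exists p, S p,
      (forall p, S p -> (2 <= p)%N) &
      (forall p q, S p -> S q -> p <> q -> coprime p q)].

(* N = Z[{1/p : p in S}] : the subring of Q generated by the 1/p, p in S,
   i.e. the intersection of all subrings of Q containing every 1/p. *)
Definition N_S (S : nat -> Prop) (x : rat) : Prop :=
  forall P : rat -> Prop,
    P 1 ->
    (forall a b, P a -> P b -> P (a - b)) ->
    (forall a b, P a -> P b -> P (a * b)) ->
    (forall p, S p -> P (p%:R)^-1) ->
    P x.

Definition mulN (S : nat -> Prop) (g : nat) (x : rat) : Prop :=
  exists y, N_S S y /\ x = g%:R * y.

Definition is_gcd_S (S : nat -> Prop) (g : nat) : Prop :=
  (forall p, S p -> (g %| p.-1)%N) /\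
  (forall d, (forall p, S p -> (d %| p.-1)%N) -> (d %| g)%N).

Definition smallest_elems (S : nat -> Prop) (s : seq nat) : Prop :=
  [/\ sorted ltn s,
      (forall p, p \in s -> S p) &
      (forall p q, S p -> p \notin s -> q \in s -> (q < p)%N)].

Definition gcd_seq (s : seq nat) : nat := foldr gcdn 0%N [seq p.-1 | p <- s].

(* A map phi : N -> Z/gZ (values taken as integers read modulo g) that is a
   group homomorphism and induces an INJECTIVE, well-defined map on N/gN:
   phi x = phi y in Z/gZ  iff  x - y in gN. *)
Definition quot_embedding (S : nat -> Prop) (g : nat) (phi : rat -> int) : Prop :=
  (forall x y, N_S S x -> N_S S y -> (phi (x + y) = phi x + phi y %[mod g%:Z])%Z) /\
  (forall x y, N_S S x -> N_S S y ->
     ((phi x = phi y %[mod g%:Z])%Z <-> mulN S g (x - y))).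

Definition quot_embeds_in_Zmod (S : nat -> Prop) (g : nat) : Prop :=
  exists phi : rat -> int, quot_embedding S g phi.

Definition quot_iso_Zmod (S : nat -> Prop) (g : nat) : Prop :=
  exists phi : rat -> int, quot_embedding S g phi /\
    (forall z : int, exists x, N_S S x /\ (phi x = z %[mod g%:Z])%Z).

From mathcomp Require Import all_boot all_order all_algebra.
From mathcomp Require Import ring.
From Stdlib Require Import ClassicalEpsilon.
Import Order.TTheory GRing.Theory Num.Theory.
Local Open Scope ring_scope.

(* For g > 0 every element of N is congruent modulo gN to an integer: by the
   pigeonhole principle p^i = p^j (mod g) for some i < j, whence
   1/p = p^(j-i-1) modulo gN, and the elements of N congruent to an integer
   form a subring.  So Z -> N/gN is onto and N/gN = Z/cZ for some c | g,
   which embeds into Z/gZ through multiplication by g/c.  If moreover every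
   p in S is prime to g, as for g = g_S (which divides every p - 1), then the
   denominators of the elements of N are prime to g, which forces c = g. *)

Lemma expn_mod_collision (p g : nat) :
  (0 < g)%N -> exists i j, (i < j)%N /\ p ^ i = p ^ j %[mod g].
Proof.
move=> g_gt0; pose f (i : 'I_g.+1) : 'I_g := Ordinal (ltn_pmod (p ^ i) g_gt0).
have /injectivePn[i [j neq_ij /(congr1 val) /= eq_fij]] : ~~ injectiveb f.
  by apply/injectiveP => /leq_card; rewrite !card_ord ltnn.
case: (ltngtP i j) => [lt_ij | lt_ji | /val_inj eq_ij].
- by exists i, j.
- by exists j, i.
- by rewrite eq_ij eqxx in neq_ij.
Qed.

Lemma eqz_mod_mul2r (a b c d : int) :
  d != 0 -> (a * d = b * d %[mod c * d])%Z <-> (c %| a - b)%Z.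
Proof. by move=> d_neq0; rewrite (rwP eqP) eqz_mod_dvd -mulrBl dvdz_mul2r. Qed.

Lemma int_ideal_principal (P : int -> Prop) (g : nat) :
  (0 < g)%N -> P g ->
  (forall a b, P a -> P b -> P (a - b)) -> (forall a n, P a -> P (a * n)) ->
  exists2 c : nat, (0 < c)%N & forall n, P n <-> (c%:Z %| n)%Z.
Proof.
move=> g_gt0 Pg PB PM.
pose Q k := if excluded_middle_informative ((0 < k)%N /\ P k) then true else false.
have QP k : Q k <-> (0 < k)%N /\ P k by rewrite /Q; case: excluded_middle_informative.
have [c /QP[c_gt0 Pc] c_min] := ex_minnP (ex_intro Q g (proj2 (QP g) (conj g_gt0 Pg))).
exists c => // n; split => [Pn | /dvdzP[q ->]]; last by rewrite mulrC; apply: PM.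
have Pr : P (n %% c%:Z)%Z.
  have -> : (n %% c%:Z)%Z = n - (n %/ c%:Z)%Z * c%:Z.
    by rewrite {2}(divz_eq n c%:Z) addrC addKr.
  by apply: PB => //; rewrite mulrC; apply: PM.
have r_ge0 : 0 <= (n %% c%:Z)%Z by rewrite modz_ge0 // eqz_nat -lt0n.
have r_lt_c : (n %% c%:Z)%Z < c%:Z by rewrite ltz_pmod // ltz_nat.
apply/dvdz_mod0P; move: Pr r_ge0 r_lt_c.
case: (n %% c%:Z)%Z => [[|k] Pk _ | //] //; rewrite ltz_nat => lt_kc.
by have := c_min k.+1 (proj2 (QP k.+1) (conj isT Pk)); rewrite leqNgt lt_kc.
Qed.

Section SubringN.
Set Implicit Arguments.
Variable S : nat -> Prop.

Lemma N_S1 : N_S S 1. Proof. by move=> P. Qed.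

Lemma N_SB x y : N_S S x -> N_S S y -> N_S S (x - y).
Proof. by move=> Nx Ny P P1 PB PM PV; apply: (PB); [apply: Nx | apply: Ny]. Qed.

Lemma N_SM x y : N_S S x -> N_S S y -> N_S S (x * y).
Proof. by move=> Nx Ny P P1 PB PM PV; apply: (PM); [apply: Nx | apply: Ny]. Qed.

Lemma N_SV p : S p -> N_S S p%:R^-1.
Proof. by move=> Sp P P1 PB PM PV; apply: PV. Qed.

Lemma N_S0 : N_S S 0.
Proof. by rewrite -(subrr 1); apply: N_SB; apply: N_S1. Qed.

Lemma N_SN x : N_S S x -> N_S S (- x).
Proof. by move=> Nx; rewrite -sub0r; apply: N_SB => //; apply: N_S0. Qed.

Lemma N_SD x y : N_S S x -> N_S S y -> N_S S (x + y).
Proof. by move=> Nx Ny; rewrite -[y]opprK; apply: N_SB => //; apply: N_SN. Qed.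

Lemma N_Snat n : N_S S n%:R.
Proof.
elim: n => [|n IHn]; first exact: N_S0.
by rewrite -addn1 natrD; apply: N_SD => //; apply: N_S1.
Qed.

Lemma N_Sint (z : int) : N_S S z%:~R.
Proof. by case: z => n; rewrite ?NegzE ?intrN; [|apply: N_SN]; apply: N_Snat. Qed.

Lemma N_SX x n : N_S S x -> N_S S (x ^+ n).
Proof.
move=> Nx; elim: n => [|n IHn]; first exact: N_S1.
by rewrite exprS; apply: N_SM.
Qed.

Variable g : nat.

Lemma mulNB x y : mulN S g x -> mulN S g y -> mulN S g (x - y).
Proof.
by move=> [a [Na ->]] [b [Nb ->]]; exists (a - b); split; [exact: N_SB | rewrite mulrBr].
Qed.

Lemma mulN0 : mulN S g 0.
Proof. by exists 0; split; [exact: N_S0 | rewrite mulr0]. Qed.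

Lemma mulND x y : mulN S g x -> mulN S g y -> mulN S g (x + y).
Proof.
by move=> Nx Ny; rewrite -[y]opprK; apply: mulNB => //; rewrite -sub0r; apply: mulNB mulN0 Ny.
Qed.

Lemma mulNMr x y : mulN S g x -> N_S S y -> mulN S g (x * y).
Proof. by move=> [a [Na ->]] Ny; exists (a * y); split; [exact: N_SM | rewrite mulrA]. Qed.

Lemma mulN_self : mulN S g g%:R.
Proof. by exists 1; split; [exact: N_S1 | rewrite mulr1]. Qed.

Lemma mulN_int (n : int) : (g%:Z %| n)%Z -> mulN S g n%:~R.
Proof.
by case/dvdzP => q ->; exists q%:~R; split; [exact: N_Sint | rewrite intrM mulrC].
Qed.

(* For x outside N the value is arbitrary. *)
Definition int_rep (x : rat) : int :=
  epsilon (inhabits 0) (fun n : int => mulN S g (x - n%:~R)).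

Hypothesis S_gt0 : forall p, S p -> (0 < p)%N.
Hypothesis g_gt0 : (0 < g)%N.

Lemma mulN_invn_expn p : S p -> exists n : nat, mulN S g (p%:R^-1 - n%:R).
Proof.
move=> Sp; have p_gt0 := S_gt0 Sp.
have [i [j [lt_ij eq_pij]]] := expn_mod_collision p g g_gt0.
have {lt_ij} [k def_j] : exists k, j = (i + k.+1)%N.
  by exists (j - i.+1)%N; rewrite addnS -addSn subnKC.
have le_pij : (p ^ i <= p ^ (i + k.+1))%N by rewrite leq_pexp2l ?leq_addr.
move/eqP: eq_pij; rewrite def_j eq_sym eqn_mod_dvd // => dvd_g.
(* 1/p - p^k = (p^i - p^(i+k+1)) / p^(i+1), and g divides the numerator. *)
exists (p ^ k)%N, (- ((p ^ (i + k.+1) - p ^ i) %/ g)%N%:R * p%:R^-1 ^+ i.+1).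
split; first by apply: N_SM; [apply: N_SN; apply: N_Snat | apply: N_SX; apply: N_SV].
rewrite mulrA mulrN -natrM mulnC divnK // natrB // !natrX exprVn.
have p_neq0 : (p%:R : rat) != 0 by rewrite pnatr_eq0 -lt0n.
have pi_neq0 : (p%:R : rat) ^+ i != 0 by rewrite expf_neq0.
rewrite exprD !exprS; move: pi_neq0 p_neq0.
move: (p%:R ^+ i : rat) (p%:R ^+ k : rat) (p%:R : rat) => a b q a_neq0 q_neq0.
by field; rewrite a_neq0 q_neq0.
Qed.

Lemma mulN_int_rep x : N_S S x -> mulN S g (x - (int_rep x)%:~R).
Proof.
move=> Nx; apply: (epsilon_spec (inhabits 0) (fun n : int => mulN S g (x - n%:~R))).
have [] : N_S S x /\ exists n : int, mulN S g (x - n%:~R); last by [].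
apply: (Nx (fun x => N_S S x /\ exists n : int, mulN S g (x - n%:~R))).
- by split; [apply: N_S1 | exists 1; rewrite subrr; apply: mulN0].
- move=> a b [Na [m Nam]] [Nb [n Nbn]]; split; first exact: N_SB.
  exists (m - n); rewrite intrB.
  have -> : a - b - (m%:~R - n%:~R) = (a - m%:~R) - (b - n%:~R) by ring.
  exact: mulNB.
- move=> a b [Na [m Nam]] [Nb [n Nbn]]; split; first exact: N_SM.
  exists (m * n); rewrite intrM.
  have -> : a * b - m%:~R * n%:~R = (a - m%:~R) * b + (b - n%:~R) * m%:~R by ring.
  by apply: mulND; apply: mulNMr => //; apply: N_Sint.
- move=> p Sp; split; first exact: N_SV.
  by have [n Nn] := mulN_invn_expn Sp; exists n.
Qed.

Lemma mulN_int_principal :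
  exists2 c : nat, (0 < c)%N & forall n : int, mulN S g n%:~R <-> (c%:Z %| n)%Z.
Proof.
apply: (@int_ideal_principal (fun n : int => mulN S g n%:~R) g g_gt0).
- by rewrite -pmulrn; apply: mulN_self.
- by move=> a b Na Nb; rewrite intrB; apply: mulNB.
- by move=> a n Na; rewrite intrM; apply: mulNMr => //; apply: N_Sint.
Qed.

Lemma mulN_int_repB x y : N_S S x -> N_S S y ->
  mulN S g (x - y) <-> mulN S g (int_rep x - int_rep y)%:~R.
Proof.
move=> Nx Ny; move: (mulN_int_rep Nx) (mulN_int_rep Ny); rewrite intrB.
move: (int_rep x)%:~R (int_rep y)%:~R => a b Nxa Nyb.
split=> [Nxy | Nab].
- have -> : a - b = (x - y) - ((x - a) - (y - b)) by ring.
  by apply: mulNB => //; apply: mulNB.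
- have -> : x - y = (x - a) - (y - b) + (a - b) by ring.
  by apply: mulND => //; apply: mulNB.
Qed.

Lemma quot_embedding_scaled c : (0 < c)%N ->
  (forall n : int, mulN S g n%:~R <-> (c%:Z %| n)%Z) ->
  quot_embedding S g (fun x => int_rep x * (g %/ c)%N%:Z).
Proof.
move=> c_gt0 kerE.
have dvd_cg : (c %| g)%N by have := mulN_self; rewrite pmulrn => /kerE; rewrite dvdzE.
have gE : g%:Z = c%:Z * (g %/ c)%N%:Z by rewrite -PoszM mulnC divnK.
have gc_neq0 : (g %/ c)%N%:Z != 0 by rewrite eqz_nat -lt0n divn_gt0 // dvdn_leq.
split=> x y Nx Ny; rewrite gE.
  rewrite -mulrDl eqz_mod_mul2r // -kerE intrB intrD.
  have := mulN_int_rep (N_SD Nx Ny).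
  move: (mulN_int_rep Nx) (mulN_int_rep Ny).
  move: (int_rep (x + y))%:~R (int_rep x)%:~R (int_rep y)%:~R => a b e Nxb Nye Nxya.
  have -> : a - (b + e) = (x - b) + (y - e) - (x + y - a) by ring.
  by apply: mulNB => //; apply: mulND.
by rewrite eqz_mod_mul2r // -kerE -(mulN_int_repB Nx Ny).
Qed.

Lemma quot_embeds_in_Zmod_gt0 : quot_embeds_in_Zmod S g.
Proof.
have [c c_gt0 kerE] := mulN_int_principal.
by eexists; apply: quot_embedding_scaled kerE.
Qed.

Hypothesis S_coprime : forall p, S p -> coprime p g.

Lemma N_S_coprime_denom y : N_S S y ->
  exists2 m : nat, coprime m g & exists a : int, y * m%:R = a%:~R.
Proof.
pose P (y : rat) := exists2 m : nat, coprime m g & exists a : int, y * m%:R = a%:~R.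
move=> Ny; change (P y); apply: (Ny P); rewrite /P {P}.
- by exists 1%N; rewrite ?coprime1n //; exists 1; rewrite mulr1.
- move=> u v [m1 cm1 [a1 E1]] [m2 cm2 [a2 E2]].
  exists (m1 * m2)%N; first by rewrite coprimeMl cm1.
  by exists (a1 * m2%:Z - a2 * m1%:Z); rewrite intrB !intrM -E1 -E2 natrM /=; ring.
- move=> u v [m1 cm1 [a1 E1]] [m2 cm2 [a2 E2]].
  exists (m1 * m2)%N; first by rewrite coprimeMl cm1.
  by exists (a1 * a2); rewrite intrM -E1 -E2 natrM /=; ring.
- move=> p Sp; exists p; first exact: S_coprime.
  by exists 1; rewrite mulVf // pnatr_eq0 -lt0n S_gt0.
Qed.

Lemma mulN_intE (n : int) : mulN S g n%:~R <-> (g%:Z %| n)%Z.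
Proof.
split=> [[y [Ny E]] | ]; last exact: mulN_int.
have [m cop_mg [a Ey]] := N_S_coprime_denom Ny.
have : (g%:Z %| n * m%:Z)%Z.
  apply/dvdzP; exists a; apply: (@intr_inj rat); rewrite !intrM E -Ey /=; ring.
by rewrite Gauss_dvdzl // /coprimez /gcdz /= gcdnC.
Qed.

Lemma quot_iso_Zmod_coprime : quot_iso_Zmod S g.
Proof.
exists (fun x => int_rep x * (g %/ g)%N%:Z).
split; first exact: quot_embedding_scaled mulN_intE.
move=> z; exists z%:~R; split; first exact: N_Sint.
have /mulN_intE : mulN S g (z - int_rep z%:~R)%:~R.
  by rewrite intrB; exact: mulN_int_rep (N_Sint z).
by rewrite divnn g_gt0 mulr1 (rwP eqP) eq_sym eqz_mod_dvd.
Qed.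

End SubringN.

Theorem lemma6p11 (S : nat -> Prop) (gS : nat) :
  admissible_set S -> is_gcd_S S gS ->
  quot_iso_Zmod S gS /\
  (forall s : seq nat, (1 <= size s)%N -> smallest_elems S s ->
     quot_embeds_in_Zmod S (gcd_seq s)).
Proof.
move=> [[p Sp] S_ge2 _] [gS_dvd _].
have S_gt0 q : S q -> (0 < q)%N by move/S_ge2; apply: leq_trans.
have predS_gt0 q : S q -> (0 < q.-1)%N by move/S_ge2; rewrite -subn1 subn_gt0.
have gS_gt0 : (0 < gS)%N.
  rewrite lt0n; apply: contraTneq (predS_gt0 p Sp) => gS0.
  by rewrite -eqn0Ngt -dvd0n -gS0 gS_dvd.
have S_coprime q : S q -> coprime q gS.
  move=> Sq; apply: coprime_dvdr (gS_dvd q Sq) _.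
  by rewrite -{1}(prednK (S_gt0 q Sq)) coprimeSn.
split; first exact: quot_iso_Zmod_coprime.
case=> [//|q s] _ [_ s_in_S _].
apply: quot_embeds_in_Zmod_gt0 S_gt0 _.
by rewrite /gcd_seq /= gcdn_gt0 predS_gt0 //; apply: s_in_S; rewrite mem_head.
Qed.
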